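(* Let $n\ge 6$ be even, and let $d_*=(\epsilon_1,\dots,\epsilon_{n-1},h)$ be the extended difference row of a Latin row of length $n$ with inner distance $\frac n2-1$, and suppose $h\ge 0$. Then one of the following holds. (0) $h=0$, and $d_*$ is a rotation of $(1^{\frac n2-1},0,(-1)^{\frac n2-1},0)$ or $d_*=\pm(1,\dots,1)$. (Type 1) $h>0$ and $\epsilon_1,\dots,\epsilon_{n-1}\in\{0,-1\}$; then $h=\frac n2-1$ and $(\epsilon_1,\dots,\epsilon_{n-1})=(0,-1,0,-1,\dots,-1,0)$ alternates. Or $h>0$ and $\epsilon_1,\dots,\epsilon_{n-1}\in\{0,1\}$; then \[d_*=(1^{\frac n2-h+1},\underbrace{0,1,0,1,\dots,0,1}_{h-1\text{ pairs }(0,1)},1^{\frac n2-h},h),\] where $h$ is odd with $h\in[1,\frac n2-1]$ if $n\equiv 0\pmod 4$, and $h$ is even with $h\in[1,\frac n2-1]$ if $n\equiv 2\pmod 4$. (Type 2) $h>0$ and each of $0,1,-1$ occurs among $\epsilon_1,\dots,\epsilon_{n-1}$; then \[d_*=(1^{m},0,(-1)^{m+1},\underbrace{0,-1,\dots,0,-1}_{h-1\text{ pairs }(0,-1)},(-1)^{\frac n2-h-m-1},0,1^{\frac n2-h-m-1},h)\] for some $h\in[1,\frac n2-2]$ and some $m\in[0,\frac n2-1-h]$.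
   Context: Symbols are $[1,n]$. For $a,b\in[1,n]$, $\mathrm{dist}(a,b)$ is the minimum of the residues of $a-b$ and $b-a$ modulo $n$ (in $[0,n-1]$). A Latin row of length $n$ is a permutation $(s_1,\dots,s_n)$ of $[1,n]$; its inner distance is $\min_{1\le j\le n-1}\mathrm{dist}(s_j,s_{j+1})$. Its extended difference row is $d_*=(\epsilon_1,\dots,\epsilon_{n-1},h)$ where, with $h_j\in[0,n-1]$, $h_j\equiv s_{j+1}-s_j\pmod n$ for $1\le j\le n-1$ and $h_n\equiv s_1-s_n\pmod n$, one sets $\epsilon_j=h_j-\frac n2$ and $h=h_n-\frac n2$ (integers). Notation $x^{a}$ inside a vector denotes $a$ consecutive entries equal to $x$ (none if $a=0$). Writing $\epsilon_n=h$, the rotation by 1 of $d_*$ is $(\epsilon_n,\epsilon_1,\dots,\epsilon_{n-1})$, and rotations are iterates of this shift. *)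

From mathcomp Require Import all_boot all_order all_algebra.
Set Implicit Arguments. Unset Strict Implicit. Unset Printing Implicit Defensive.
Import Order.TTheory GRing.Theory Num.Theory.
Local Open Scope ring_scope.

(* A Latin row of length n: a sequence (s_1,...,s_n) (stored 0-indexed as
   s = [:: s_1; ...; s_n]) that is a permutation of [1,n]. *)
Definition latin_row (n : nat) (s : seq nat) : bool := perm_eq s (iota 1 n).

Definition cdist (n a b : nat) : nat :=
  minn `|((a%:Z - b%:Z) %% n%:Z)%Z|%N `|((b%:Z - a%:Z) %% n%:Z)%Z|%N.

Definition inner_distance (n : nat) (s : seq nat) : nat :=
  \big[minn/n]_(j < n.-1) cdist n (nth 0%N s j) (nth 0%N s j.+1).

Definition hdiff (n : nat) (s : seq nat) (j : nat) : int :=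
  (((nth 0%N s ((j.+1) %% n)%N)%:Z - (nth 0%N s j)%:Z) %% n%:Z)%Z.

Definition ext_diff_row (n : nat) (s : seq nat) : seq int :=
  [seq hdiff n s j - (n./2)%:Z | j <- iota 0 n].

Definition ext_h (n : nat) (s : seq nat) : int := nth 0 (ext_diff_row n s) n.-1.
Definition ext_eps (n : nat) (s : seq nat) : seq int := take n.-1 (ext_diff_row n s).

Definition rot1 (d : seq int) : seq int := rotr 1 d.
Definition is_rotation_of (d e : seq int) : Prop := exists k : nat, d = iter k rot1 e.

Definition pw (a : nat) (x : int) : seq int := nseq a x.
Definition pairs (a : nat) (x y : int) : seq int := flatten (nseq a [:: x; y]).

From mathcomp Require Import all_boot all_order all_algebra.
From mathcomp Require Import zify.
Import Order.TTheory GRing.Theory Num.Theory.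
Set Implicit Arguments. Unset Strict Implicit. Unset Printing Implicit Defensive.
Local Open Scope ring_scope.

(* Write n = 2k and let P j = eps_1 + ... + eps_j, so that s_(j+1) = s_1 + j k + P j
   (mod 2k).  Inner distance k - 1 puts every eps_j in {-1, 0, 1}, and the Latin property
   of s becomes a property of the walk P alone: a value is repeated only at indices of
   opposite parity, two values differing by k only occur at indices of equal parity, and
   every v with |P j - v| < k for all j is taken at both parities.  Such walks are rigid.
   If max P - min P >= k, the walk runs from its minimum P 0 = 0 to its maximum at the
   end: it rises strictly for p steps, alternates flat and rising steps, and rises
   strictly for the last p - 1 steps.  Otherwise the range is k - 1: the walk rises
   strictly to its first maximum a, stays flat once, falls back to 0, and from there on
   it is a walk confined to a window, which by induction on the width of the window
   consists of (flat, falling) pairs followed by a V-shaped descent and ascent.  The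
   closing condition h + P (2k - 1) = 0 (mod 2k) then determines h. *)

Lemma small_multiple_eq0 (a c m : int) : 0 < m -> a = c * m -> -m < a -> a < m -> a = 0.
Proof.
move=> m0 ->.
case: (ltrgt0P c) => [c0|c0|->]; last by rewrite mul0r.
- have c1 : 1 <= c by lia.
  have : m <= c * m by rewrite ler_pMl.
  lia.
- have c1 : c <= -1 by lia.
  have : c * m <= - m by rewrite -mulN1r ler_pM2r.
  lia.
Qed.

Lemma oddSS i : odd i.+2 = odd i.
Proof. by rewrite /= negbK. Qed.

Lemma exists_argmax (f : nat -> int) L :
  (0 < L)%N -> exists a, (a < L)%N /\ forall j, (j < L)%N -> f j <= f a.
Proof.
elim: L => [//|[|L] IH] _.
  by exists 0%N; split => // j; rewrite ltnS leqn0 => /eqP ->.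
have [a [ha Ha]] := IH isT.
case: (lerP (f L.+1) (f a)) => h.
  exists a; split; first lia.
  move=> j; rewrite ltnS leq_eqVlt => /orP[/eqP ->|]; [exact: h|exact: Ha].
exists L.+1; split => // j; rewrite ltnS leq_eqVlt => /orP[/eqP -> //|/Ha].
lia.
Qed.

Lemma exists_argmin (f : nat -> int) L :
  (0 < L)%N -> exists a, (a < L)%N /\ forall j, (j < L)%N -> f a <= f j.
Proof.
move=> hL; have [a [ha Ha]] := exists_argmax (fun x => - f x) hL.
exists a; split => // j hj; have := Ha j hj; lia.
Qed.

Definition unit_steps (L : nat) (P : nat -> int) :=
  forall j, (j.+1 < L)%N -> P j - 1 <= P j.+1 /\ P j.+1 <= P j + 1.

Lemma unit_steps_ivt_up L P i j v : unit_steps L P -> (i <= j)%N -> (j < L)%N ->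
  P i <= v -> v <= P j -> exists t, [/\ (i <= t)%N, (t <= j)%N & P t = v].
Proof.
move=> steps; elim: j => [|j IH] hij hjL Hi Hj.
  have i0 : i = 0%N by lia.
  by subst i; exists 0%N; split => //; lia.
case: (leqP i j) => hij'; last first.
  have ei : i = j.+1 by lia.
  by subst i; exists j.+1; split => //; lia.
case: (lerP v (P j)) => hv.
  by have [t [? ? ?]] := IH hij' (ltnW hjL) Hi hv; exists t; split => //; lia.
have [s1 s2] := steps j hjL.
by exists j.+1; split => //; lia.
Qed.

Section UnitSteps.

Variables (L : nat) (P : nat -> int).
Hypothesis steps : unit_steps L P.

Lemma unit_steps_ivt_down i j v : (i <= j)%N -> (j < L)%N ->
  v <= P i -> P j <= v -> exists t, [/\ (i <= t)%N, (t <= j)%N & P t = v].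
Proof.
move=> hij hjL H1 H2.
have stepsN : unit_steps L (fun x => - P x).
  by move=> x hx; have [? ?] := steps hx; split; lia.
have [t [? ? ?]] := @unit_steps_ivt_up L _ _ _ (- v) stepsN hij hjL ltac:(lia) ltac:(lia).
by exists t; split => //; lia.
Qed.

Lemma unit_steps_ivt i j v : (i <= j)%N -> (j < L)%N ->
  (P i <= v <= P j \/ P j <= v <= P i) ->
  exists t, [/\ (i <= t)%N, (t <= j)%N & P t = v].
Proof.
move=> hij hjL [/andP[a b]|/andP[a b]].
  exact: (unit_steps_ivt_up steps).
exact: unit_steps_ivt_down.
Qed.

Lemma unit_steps_hit i j v : (i < L)%N -> (j < L)%N ->
  (P i <= v <= P j \/ P j <= v <= P i) -> exists t, (t < L)%N /\ P t = v.
Proof.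
move=> hi hj H.
case: (leqP i j) => hij.
  by have [t [? ? ?]] := unit_steps_ivt hij hj H; exists t; split => //; lia.
have H' : P j <= v <= P i \/ P i <= v <= P j by case: H; [right|left].
have [t [? ? ?]] := unit_steps_ivt (ltnW hij) hi H'.
by exists t; split => //; lia.
Qed.

End UnitSteps.

Definition diffs (f : nat -> int) (m : nat) : seq int := mkseq (fun i => f i.+1 - f i) m.

Lemma diffs_cat f a b : diffs f (a + b) = diffs f a ++ diffs (fun i => f (a + i)%N) b.
Proof.
rewrite /diffs /mkseq iotaD map_cat add0n; congr (_ ++ _).
rewrite -[a in iota a]addn0 iotaDl -map_comp.
by apply: eq_map => i /=; rewrite addnS.
Qed.

Lemma diffs1 f : diffs f 1 = [:: f 1%N - f 0%N].
Proof. by []. Qed.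

Lemma diffs_shift f c m : diffs (fun i => f i + c) m = diffs f m.
Proof. by apply: eq_mkseq => i /=; lia. Qed.

Lemma diffs_const f a x :
  (forall i, (i < a)%N -> f i.+1 - f i = x) -> diffs f a = pw a x.
Proof.
move=> H; apply: (@eq_from_nth _ 0); first by rewrite size_mkseq size_nseq.
by move=> i; rewrite size_mkseq => hi; rewrite nth_mkseq // nth_nseq hi H.
Qed.

Lemma diffs_pairs c f x y :
  (forall i, (i < c)%N -> f (2 * i).+1 - f (2 * i)%N = x /\ f (2 * i).+2 - f (2 * i).+1 = y) ->
  diffs f (2 * c) = pairs c x y.
Proof.
elim: c f => [|c IH] f H //.
rewrite (_ : 2 * c.+1 = 2 + 2 * c)%N; last lia.
rewrite diffs_cat IH; first by have [a b] := H 0%N isT; rewrite /diffs /= a b.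
move=> i hi; have [a b] := H i.+1 ltac:(lia).
rewrite (_ : 2 + (2 * i).+1 = (2 * i.+1).+1)%N; last lia.
rewrite (_ : 2 + (2 * i) = 2 * i.+1)%N; last lia.
by rewrite (_ : 2 + (2 * i).+2 = (2 * i.+1).+2)%N; last lia.
Qed.

Lemma pairsS c (x y : int) : pairs c.+1 x y = x :: y :: pairs c x y.
Proof. by []. Qed.

Lemma cat_pw_cons (x : int) a l : pw a x ++ x :: l = pw a.+1 x ++ l.
Proof. by elim: a => //= a ->. Qed.

Lemma mem_pw (x : int) c : (0 < c)%N -> x \in pw c x.
Proof. by move=> hc; rewrite mem_nseq eqxx andbT. Qed.

Lemma all_pw (a : pred int) c x : a x -> all a (pw c x).
Proof. by move=> ax; rewrite all_nseq ax orbT. Qed.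

Lemma all_pairs (a : pred int) c x y : a x -> a y -> all a (pairs c x y).
Proof. by move=> ax ay; elim: c => //= c ->; rewrite ax ay. Qed.

Lemma iter_rot1_cat (X Y : seq int) : iter (size Y) rot1 (X ++ Y) = Y ++ X.
Proof.
elim/last_ind: Y X => [|Y y IH] X; first by rewrite cats0.
rewrite size_rcons iterSr /rot1 -rcons_cat rotr1_rcons.
by rewrite -cat_cons IH cat_rcons.
Qed.

Definition parity_separated (L : nat) (Q : nat -> int) :=
  forall i j, (i < L)%N -> (j < L)%N -> i <> j -> Q i = Q j -> odd i = ~~ odd j.

Lemma parity_separated_no_triple L Q : parity_separated L Q ->
  forall i j l, (i < j)%N -> (j < l)%N -> (l < L)%N -> Q i = Q j -> Q j = Q l -> False.
Proof.
move=> F i j l hij hjl hl e1 e2.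
have a := F i j ltac:(lia) ltac:(lia) ltac:(lia) e1.
have b := F j l ltac:(lia) ltac:(lia) ltac:(lia) e2.
have c := F i l ltac:(lia) ltac:(lia) ltac:(lia) ltac:(congruence).
by move: a b c; case: (odd i); case: (odd j); case: (odd l).
Qed.

(* Abstracts [row_walk k s]: injectivity of the row yields the two parity fields and its
   surjectivity onto [1, 2k] yields [lw_surj]. *)
Record latin_walk (k : nat) (P : nat -> int) : Prop := LatinWalk {
  lw_k : (3 <= k)%N;
  lw_P0 : P 0%N = 0;
  lw_steps : unit_steps k.*2 P;
  lw_eq_odd : forall i j, (i < j)%N -> (j < k.*2)%N -> P i = P j -> odd (j - i);
  lw_odd_not_antipodal : forall i j, (i < j)%N -> (j < k.*2)%N -> odd (j - i) ->
    P j - P i <> k%:Z /\ P j - P i <> - k%:Z;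
  lw_surj : forall (v : int) (b : bool),
    (forall j, (j < k.*2)%N -> v - k%:Z < P j /\ P j < v + k%:Z) ->
    exists j, [/\ (j < k.*2)%N, P j = v & odd j = b]
}.

Section LatinWalk.

Variables (k : nat) (P : nat -> int).
Hypothesis W : latin_walk k P.

Lemma lw_parity_separated : parity_separated k.*2 P.
Proof.
move=> i j hi hj nij e.
case: (ltnP i j) => h.
  by have := lw_eq_odd W h hj e; rewrite oddB ?(ltnW h) //; case: (odd i); case: (odd j).
have h' : (j < i)%N by lia.
by have := lw_eq_odd W h' hi (esym e); rewrite oddB ?(ltnW h') //; case: (odd i); case: (odd j).
Qed.

Lemma lw_no_triple i j l : (i < j)%N -> (j < l)%N -> (l < k.*2)%N ->
  P i = P j -> P j = P l -> False.
Proof. exact: parity_separated_no_triple lw_parity_separated i j l. Qed.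

Lemma lw_antipodal_parity i j : (i < k.*2)%N -> (j < k.*2)%N ->
  (P j - P i = k%:Z \/ P j - P i = - k%:Z) -> odd i = odd j.
Proof.
move=> hi hj e.
case: (ltngtP i j) => h; last by rewrite h.
  case Ho: (odd (j - i)); first by have := lw_odd_not_antipodal W h hj Ho; case: e => e [].
  by move: Ho; rewrite oddB ?(ltnW h) //; case: (odd i); case: (odd j).
case Ho: (odd (i - j)); first by have := lw_odd_not_antipodal W h hi Ho; case: e => e []; lia.
by move: Ho; rewrite oddB ?(ltnW h) //; case: (odd i); case: (odd j).
Qed.

Lemma lw_antipodal_unique b c : (b < k.*2)%N -> (c < k.*2)%N ->
  (P c - P b = k%:Z \/ P c - P b = - k%:Z) ->
  forall t, (t < k.*2)%N -> P t = P b -> t = b.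
Proof.
move=> hb hc e t ht et.
apply/eqP; apply: contraT => /eqP ntb.
have p1 := lw_antipodal_parity hb hc e.
have p2 := lw_antipodal_parity ht hc ltac:(rewrite et; exact: e).
have p3 := lw_parity_separated ht hb ntb et.
by move: p1 p2 p3; case: (odd t); case: (odd b); case: (odd c).
Qed.

Lemma lw_bound j : (j < k.*2)%N -> - (j%:Z) <= P j <= j%:Z.
Proof.
elim: j => [|j IH] hj; first by rewrite (lw_P0 W).
by have := IH (ltnW hj); have [a b] := lw_steps W hj; lia.
Qed.

Lemma lw_extreme_end x c : (x < k.*2)%N -> (c < k.*2)%N ->
  (P c - P x = k%:Z \/ P c - P x = - k%:Z) ->
  (forall j, (j < k.*2)%N -> P x <= P j) \/ (forall j, (j < k.*2)%N -> P j <= P x) ->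
  x = 0%N \/ x = (k.*2 - 1)%N.
Proof.
move=> hx hc e ext.
case: x hx e ext => [|x] hx e ext; first by left.
case: (ltnP x.+2 k.*2) => hx2; last by right; lia.
have U := lw_antipodal_unique hx hc e.
have [a b] := lw_steps W hx2.
have [a' b'] := lw_steps W hx.
have n1 : P x <> P x.+1 by move=> E; have := U x ltac:(lia) E; lia.
have n2 : P x.+2 <> P x.+1 by move=> E; have := U x.+2 hx2 E; lia.
have E : P x = P x.+2.
  by case: ext => H; have := H x ltac:(lia); have := H x.+2 hx2; lia.
have := lw_parity_separated (i := x) (j := x.+2) ltac:(lia) hx2 ltac:(lia) E.
by rewrite oddSS; case: (odd x).
Qed.

End LatinWalk.

Record confined_walk (L : nat) (Q : nat -> int) : Prop := ConfinedWalk {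
  cw_L : (1 <= L)%N;
  cw_Q0 : Q 0%N = 0;
  cw_steps : unit_steps L.*2 Q;
  cw_range : forall i, (i < L.*2)%N -> 1 - L%:Z <= Q i /\ Q i <= 0;
  cw_parity : parity_separated L.*2 Q;
  cw_surj : forall (v : int) (b : bool), 1 - L%:Z <= v -> v <= 0 ->
    exists t, [/\ (t < L.*2)%N, Q t = v & odd t = b]
}.

Section ConfinedDescent.

Variables (L : nat) (Q : nat -> int).
Hypotheses (CW : confined_walk L.+2 Q) (Q1 : Q 1%N = -1).

Lemma confined_desc_prefix i : (i <= L.+1)%N -> Q i = - i%:Z.
Proof.
have st := cw_steps CW; have rng := cw_range CW; have F := cw_parity CW.
have tw := cw_surj CW; have NT := parity_separated_no_triple F.
suff desc : forall j, (j <= L.+1)%N -> forall i, (i <= j)%N -> Q i = - i%:Z.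
  by move=> hi; exact: desc hi i (leqnn _).
elim => [|j IHj] hj {}i hi.
  have -> : i = 0%N by lia.
  by rewrite (cw_Q0 CW).
case: (ltnP i j.+1) => hij; first by apply: IHj; lia.
have -> : i = j.+1 by lia.
case: j IHj hj hi hij => [|j] IHj hj hi hij; first by rewrite Q1.
have qj := IHj ltac:(lia) j.+1 (leqnn _).
have qj' := IHj ltac:(lia) j ltac:(lia).
have [a b] := st j.+1 ltac:(lia).
have [c d] := rng j.+2 ltac:(lia).
have n1 : Q j.+2 <> Q j.
  move=> e; have := F j j.+2 ltac:(lia) ltac:(lia) ltac:(lia) (esym e).
  by rewrite oddSS; case: (odd j).
have n2 : Q j.+2 <> Q j.+1.
  move=> e.
  have [t0 [ht0 qt0 ot0]] := tw 0 true ltac:(lia) ltac:(lia).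
  have [t1 [ht1 qt1 _]] := tw (1 - L.+2%:Z) true ltac:(lia) ltac:(lia).
  have g0 : (j.+2 < t0)%N.
    case: (ltnP j.+2 t0) => // h0.
    case: (ltnP t0 j.+2) => h0'.
      have := IHj ltac:(lia) t0 ltac:(lia).
      by case: t0 {h0 h0' ht0} qt0 ot0 => [|t0] qt0 ot0 //; lia.
    have e0 : t0 = j.+2 by lia.
    rewrite e0 in qt0; lia.
  have g1 : (j.+2 < t1)%N.
    case: (ltnP j.+2 t1) => // h1.
    case: (ltnP t1 j.+2) => h1'.
      have := IHj ltac:(lia) t1 ltac:(lia); lia.
    have e1 : t1 = j.+2 by lia.
    rewrite e1 in qt1; lia.
  have [t2 [ht2 ht2' qt2]] :
      exists t2, [/\ (j.+2 < t2)%N, (t2 < L.+2.*2)%N & Q t2 = Q j.+1].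
    case: (leqP t0 t1) => h01.
      have [t [? ? ?]] := unit_steps_ivt (v := Q j.+1) st h01 ht1 ltac:(right; lia).
      by exists t; split; lia.
    have [t [? ? ?]] := unit_steps_ivt (v := Q j.+1) st (ltnW h01) ht0 ltac:(left; lia).
    by exists t; split; lia.
  exact: (NT j.+1 j.+2 t2 ltac:(lia) ht2 ht2' (esym e) (etrans e (esym qt2))).
lia.
Qed.

Lemma confined_asc_suffix i : (i <= L.+1)%N -> Q (L.+2 + i)%N = - L.+1%:Z + i%:Z.
Proof.
have st := cw_steps CW; have rng := cw_range CW; have F := cw_parity CW.
have NT := parity_separated_no_triple F.
have qL := confined_desc_prefix (leqnn L.+1).
have qL' := confined_desc_prefix (leqnSn L).
have qL2 : Q L.+2 = - L.+1%:Z.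
  have [a0 b0] := st L.+1 ltac:(lia).
  have [c0 d0] := rng L.+2 ltac:(lia).
  have : Q L.+2 <> Q L.
    move=> e; have := F L L.+2 ltac:(lia) ltac:(lia) ltac:(lia) (esym e).
    by rewrite oddSS; case: (odd L).
  lia.
suff asc : forall j, (j <= L.+1)%N -> forall i, (i <= j)%N ->
    Q (L.+2 + i)%N = - L.+1%:Z + i%:Z.
  by move=> hi; exact: asc hi i (leqnn _).
elim => [|j IHj] hj {}i hi.
  have -> : i = 0%N by lia.
  by rewrite addn0 qL2; lia.
case: (ltnP i j.+1) => hij; first by apply: IHj; lia.
have ei : i = j.+1 by lia.
subst i; clear hi hij.
have qj := IHj ltac:(lia) j (leqnn _).
have [a b] := st (L.+2 + j)%N ltac:(lia).
rewrite -addnS in a b.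
have [c d] := rng (L.+2 + j.+1)%N ltac:(lia).
have n1 : Q (L.+2 + j.+1)%N <> Q (L.+2 + j)%N.
  move=> e.
  case: j IHj hj qj a b c d e => [|j] IHj hj qj a b c d e.
    rewrite addn0 in qj e.
    exact: (NT L.+1 L.+2 (L.+2 + 1)%N ltac:(lia) ltac:(lia) ltac:(lia) ltac:(lia) ltac:(lia)).
  have q' := confined_desc_prefix (i := (L.+1 - j.+1)%N) ltac:(lia).
  exact: (NT (L.+1 - j.+1)%N (L.+2 + j.+1)%N (L.+2 + j.+2)%N
    ltac:(lia) ltac:(lia) ltac:(lia) ltac:(lia) ltac:(lia)).
have n2 : Q (L.+2 + j.+1)%N <> Q (L.+2 + j)%N - 1.
  move=> e; clear n1.
  case: j IHj hj qj a b c d e => [|j] IHj hj qj a b c d e; first lia.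
  have qj' := IHj ltac:(lia) j ltac:(lia).
  have := F (L.+2 + j)%N (L.+2 + j.+2)%N ltac:(lia) ltac:(lia) ltac:(lia) ltac:(lia).
  by rewrite addnS addnS oddSS; case: (odd _).
lia.
Qed.

Lemma confined_desc_diffs :
  diffs Q (L.+2.*2 - 1) = pw L.+1 (-1) ++ [:: 0] ++ pw L.+1 1 /\ Q (L.+2.*2 - 1)%N = 0.
Proof.
split; last first.
  have := confined_asc_suffix (leqnn L.+1).
  by rewrite (_ : L.+2.*2 - 1 = L.+2 + L.+1)%N; [lia|lia].
rewrite (_ : L.+2.*2 - 1 = L.+1 + (1 + L.+1))%N; last lia.
rewrite diffs_cat diffs_cat; congr (_ ++ _ ++ _).
- apply: diffs_const => i hi.
  by rewrite (confined_desc_prefix hi) (confined_desc_prefix (ltnW hi)); lia.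
- rewrite diffs1 addn0 addn1 (confined_desc_prefix (leqnn _)).
  by have := confined_asc_suffix (leq0n L.+1); rewrite addn0 => ->; congr [:: _]; lia.
- apply: diffs_const => i hi.
  have := confined_asc_suffix hi; have := confined_asc_suffix (ltnW hi).
  rewrite (_ : L.+1 + (1 + i.+1) = L.+2 + i.+1)%N; last lia.
  by rewrite (_ : L.+1 + (1 + i) = L.+2 + i)%N; [lia|lia].
Qed.

End ConfinedDescent.

Lemma confined_walk_flat_top L Q : confined_walk L.+2 Q -> Q 1%N = 0 ->
  Q 2%N = -1 /\ confined_walk L.+1 (fun i => Q i.+2 + 1).
Proof.
move=> CW q1.
have st := cw_steps CW; have rng := cw_range CW; have F := cw_parity CW.
have tw := cw_surj CW; have Q0 := cw_Q0 CW.
have q2 : Q 2%N = -1.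
  have [s3 s4] := st 1%N ltac:(lia).
  have [r2 r2'] := rng 2%N ltac:(lia).
  have : Q 2%N <> 0.
    by move=> e; have := F 0%N 2%N ltac:(lia) ltac:(lia) ltac:(lia) ltac:(congruence).
  lia.
split => //; constructor => //.
- by rewrite q2.
- by move=> j hj; have := st j.+2 ltac:(lia); lia.
- move=> i hi; have [a b] := rng i.+2 ltac:(lia).
  have : Q i.+2 <> 0.
    move=> e.
    have c1 := F 0%N i.+2 ltac:(lia) ltac:(lia) ltac:(lia) ltac:(congruence).
    have c2 := F 1%N i.+2 ltac:(lia) ltac:(lia) ltac:(lia) ltac:(congruence).
    by move: c1 c2; rewrite oddSS /=; case: (odd i).
  lia.
- move=> i j hi hj nij e.
  have := F i.+2 j.+2 ltac:(lia) ltac:(lia) ltac:(lia) ltac:(lia).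
  by rewrite !oddSS.
- move=> v b hv1 hv2.
  have [t [ht qt ot]] := tw (v - 1) b ltac:(lia) ltac:(lia).
  case: t ht qt ot => [|[|t]] ht qt ot; [lia|lia|].
  by exists t; split; [lia|lia|rewrite -oddSS].
Qed.

Lemma confined_walk_diffs L Q : confined_walk L Q ->
  exists r u, [/\ (r + u = L - 1)%N,
    diffs Q (L.*2 - 1) = pairs r 0 (-1) ++ pw u (-1) ++ [:: 0] ++ pw u 1 &
    Q (L.*2 - 1)%N = - r%:Z].
Proof.
elim: L Q => [|[|L] IH] Q CW; first by have := cw_L CW.
  have q1 : Q 1%N = 0 by have := cw_range CW (i := 1%N) isT; lia.
  by exists 0%N, 0%N; split => //; rewrite /= diffs1 q1 (cw_Q0 CW).
have : Q 1%N = 0 \/ Q 1%N = -1.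
  have := cw_range CW (i := 1%N) isT; have := cw_steps CW (j := 0%N) isT.
  rewrite (cw_Q0 CW); lia.
case=> q1; last first.
  have [-> ->] := confined_desc_diffs CW q1.
  by exists 0%N, L.+1; split => //; lia.
have [q2 CW'] := confined_walk_flat_top CW q1.
have [r [u [ru HD HQ]]] := IH _ CW'.
exists r.+1, u; split; first lia.
  rewrite (_ : L.+2.*2 - 1 = 2 + (L.+1.*2 - 1))%N; last lia.
  rewrite diffs_cat pairsS.
  rewrite -(diffs_shift (fun i => Q (2 + i)%N) 1) [diffs (fun i => _ + 1) _]HD.
  by rewrite /diffs /mkseq /= q1 q2 (cw_Q0 CW) subrr; congr (_ :: _ :: _); lia.
move: HQ; rewrite (_ : L.+2.*2 - 1 = (L.+1.*2 - 1).+2)%N; last lia.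
lia.
Qed.

Definition ext_row_shape (n k : nat) (d : seq int) (h : int) (eps : seq int) : Prop :=
  (h = 0 /\
     (is_rotation_of d (pw (k - 1) 1 ++ [:: 0] ++ pw (k - 1) (-1) ++ [:: 0])
      \/ d = pw n 1 \/ d = pw n (-1)))
  \/ (0 < h /\ all (fun e => e \in [:: 0; -1]) eps /\
      h = (k - 1)%N%:Z /\ eps = pairs (k - 1) 0 (-1) ++ [:: 0])
  \/ (0 < h /\ all (fun e => e \in [:: 0; 1]) eps /\
      exists hn : nat, h = hn%:Z /\ (1 <= hn <= k - 1)%N /\
        ((n %% 4 == 0)%N -> odd hn) /\ ((n %% 4 == 2)%N -> ~~ odd hn) /\
        d = pw (k - hn + 1) 1 ++ pairs (hn - 1) 0 1 ++ pw (k - hn) 1 ++ [:: hn%:Z])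
  \/ (0 < h /\ 0 \in eps /\ 1 \in eps /\ -1 \in eps /\
      exists hn m : nat, h = hn%:Z /\ (1 <= hn <= k - 2)%N /\ (m <= k - 1 - hn)%N /\
        d = pw m 1 ++ [:: 0] ++ pw m.+1 (-1) ++ pairs (hn - 1) 0 (-1)
            ++ pw (k - hn - m - 1) (-1) ++ [:: 0] ++ pw (k - hn - m - 1) 1
            ++ [:: hn%:Z]).

Lemma confined_shape k Q (h : int) : confined_walk k Q -> h = - Q (k.*2 - 1)%N -> (3 <= k)%N ->
  ext_row_shape k.*2 k (diffs Q (k.*2 - 1) ++ [:: h]) h (diffs Q (k.*2 - 1)).
Proof.
move=> CW hv k3.
have [r [u [ru ED Pe]]] := confined_walk_diffs CW.
rewrite Pe opprK in hv.
case: r ru ED Pe hv => [|r] ru ED Pe hv.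
  left; split => //; left.
  exists k; rewrite ED hv (_ : u = k - 1)%N; last lia.
  rewrite -[X in iter X _ _](_ : size (pw (k - 1) (-1) ++ [:: 0]) = k); last first.
    by rewrite size_cat size_nseq /=; lia.
  rewrite (_ : pw (k - 1) 1 ++ [:: 0] ++ pw (k - 1) (-1) ++ [:: 0] =
    (pw (k - 1) 1 ++ [:: 0]) ++ (pw (k - 1) (-1) ++ [:: 0])); last by rewrite -catA.
  by rewrite iter_rot1_cat /= -!catA.
case: u ru ED => [|u] ru ED.
  right; left; rewrite ED cats0.
  split; first lia.
  split; first by rewrite all_cat all_pairs.
  by split; [lia|rewrite (_ : k - 1 = r.+1)%N; last lia].
right; right; right.
split; first lia.
split; first by rewrite ED !mem_cat inE eqxx !orbT.
split; first by rewrite ED !mem_cat (mem_pw _ (isT : (0 < u.+1)%N)) !orbT.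
split; first by rewrite ED /= !inE eqxx !orbT.
exists r.+1, 0%N; do 3 (split; first lia).
rewrite (_ : k - r.+1 - 0 - 1 = u.+1)%N; last lia.
by rewrite ED hv subn1 /= -!catA /pairs /= -!catA.
Qed.

(* Wide walks have range max P - min P >= k; by [wide_walk_ends] they climb from their
   minimum P 0 = 0 to their maximum P (2k - 1) = k + p - 1. *)
Section WideWalk.

Variables (k p : nat) (P : nat -> int).
Hypotheses (W : latin_walk k P) (P_end : P (k.*2 - 1)%N = (k + p)%:Z - 1)
  (hp : (1 <= p <= k)%N) (P_ge0 : forall j, (j < k.*2)%N -> 0 <= P j).

(* Such a value v has an antipode v + k or v - k between P 0 and P (2k - 1). *)
Lemma wide_unique t1 t2 : (t1 < k.*2)%N -> (t2 < k.*2)%N ->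
  (0 <= P t1 <= p%:Z - 1 \/ k%:Z <= P t1 <= (k + p)%:Z - 1) ->
  P t2 = P t1 -> t2 = t1.
Proof.
move=> h1 h2 H e.
have k3 := lw_k W; have P0 := lw_P0 W.
case: H => /andP[c1 c2].
  have [c [hc ec]] := unit_steps_hit (v := P t1 + k%:Z) (lw_steps W) (i := 0%N)
    (j := (k.*2 - 1)%N) ltac:(lia) ltac:(lia) ltac:(left; lia).
  exact: (lw_antipodal_unique W h1 hc ltac:(left; lia) h2 e).
have [c [hc ec]] := unit_steps_hit (v := P t1 - k%:Z) (lw_steps W) (i := 0%N)
  (j := (k.*2 - 1)%N) ltac:(lia) ltac:(lia) ltac:(left; lia).
exact: (lw_antipodal_unique W h1 hc ltac:(right; lia) h2 e).
Qed.

Lemma wide_prefix i : (i <= p)%N -> P i = i%:Z.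
Proof.
suff pre : forall j, (j <= p)%N -> forall i, (i <= j)%N -> P i = i%:Z.
  by move=> hi; exact: pre hi i (leqnn _).
elim => [|j IH] hj {}i hi.
  have -> : i = 0%N by lia.
  exact: lw_P0 W.
case: (ltnP i j.+1) => hij; first by apply: IH; lia.
have ei : i = j.+1 by lia.
subst i; clear hi hij.
have Pj := IH ltac:(lia) j (leqnn _).
have [a b] := lw_steps W (j := j) ltac:(lia).
have n1 : P j.+1 <> P j.
  move=> e; have := wide_unique (t1 := j) (t2 := j.+1) ltac:(lia) ltac:(lia) ltac:(left; lia) e.
  lia.
have n2 : P j.+1 <> P j - 1.
  case: j IH hj Pj a b n1 => [|j] IH hj Pj a b n1 e.
    by have := P_ge0 (j := 1%N) ltac:(lia); lia.
  have Pj' := IH ltac:(lia) j ltac:(lia).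
  have := wide_unique (t1 := j) (t2 := j.+2) ltac:(lia) ltac:(lia) ltac:(left; lia) ltac:(lia).
  lia.
lia.
Qed.

Hypothesis P_le_end : forall j, (j < k.*2)%N -> P j <= P (k.*2 - 1)%N.

Lemma wide_suffix i : (i <= p - 1)%N -> P (k.*2 - 1 - i)%N = (k + p)%:Z - 1 - i%:Z.
Proof.
suff suf : forall j, (j <= p - 1)%N -> forall i, (i <= j)%N ->
    P (k.*2 - 1 - i)%N = (k + p)%:Z - 1 - i%:Z.
  by move=> hi; exact: suf hi i (leqnn _).
elim => [|j IH] hj {}i hi.
  have -> : i = 0%N by lia.
  by rewrite subn0 P_end; lia.
case: (ltnP i j.+1) => hij; first by apply: IH; lia.
have ei : i = j.+1 by lia.
subst i; clear hi hij.
have Pj := IH ltac:(lia) j (leqnn _).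
have [a b] := lw_steps W (j := (k.*2 - 1 - j.+1)%N) ltac:(lia).
rewrite (_ : (k.*2 - 1 - j.+1).+1 = k.*2 - 1 - j)%N in a b; last lia.
have n1 : P (k.*2 - 1 - j.+1)%N <> P (k.*2 - 1 - j)%N.
  move=> e; have := wide_unique (t1 := (k.*2 - 1 - j)%N) (t2 := (k.*2 - 1 - j.+1)%N)
    ltac:(lia) ltac:(lia) ltac:(right; lia) e; lia.
have n2 : P (k.*2 - 1 - j.+1)%N <> P (k.*2 - 1 - j)%N + 1.
  case: j IH hj Pj a b n1 => [|j] IH hj Pj a b n1 e.
    by have := P_le_end (j := (k.*2 - 1 - 1)%N) ltac:(lia); lia.
  have Pj' := IH ltac:(lia) j ltac:(lia).
  have := wide_unique (t1 := (k.*2 - 1 - j)%N) (t2 := (k.*2 - 1 - j.+2)%N)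
    ltac:(lia) ltac:(lia) ltac:(right; lia) ltac:(lia); lia.
lia.
Qed.

Lemma wide_antipode_of_zero : P (k.*2 - p)%N = k%:Z.
Proof.
have := wide_suffix (leqnn (p - 1)).
by rewrite (_ : k.*2 - 1 - (p - 1) = k.*2 - p)%N; lia.
Qed.

Lemma wide_middle_even_no_rise j : (p + (2 * j).+1 <= k.*2 - p)%N ->
  (forall t, (p <= t)%N -> (t <= p + 2 * j)%N -> P t = (p + (t - p) %/ 2)%N%:Z) ->
  P (p + 2 * j).+1 <> (p + j)%N%:Z + 1.
Proof.
move=> hd IHv e.
have NT := lw_no_triple W; have st := lw_steps W.
have PNp := wide_antipode_of_zero.
set t0 := (p + 2 * j)%N in hd IHv e *.
have Pt0 : P t0 = (p + j)%N%:Z.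
  by rewrite (IHv t0) /t0 ?leq_addr //; congr (_%:Z); lia.
have window : forall t', (t' < k.*2)%N ->
    (p + j)%N%:Z - k%:Z < P t' /\ P t' < (p + j)%N%:Z + k%:Z.
  by move=> t' ht'; have := P_ge0 ht'; have := P_le_end ht'; rewrite P_end /t0 in hd *; lia.
have [t [ht Pt ot]] := lw_surj W (~~ odd t0) window.
have gt0 : (t0 < t)%N.
  case: (ltnP t0 t) => // h.
  case: (ltnP t p) => h'; first by have := wide_prefix (i := t) ltac:(lia); lia.
  have := IHv t h' h; rewrite Pt => E.
  have E' : t = t0 by rewrite /t0 in h *; lia.
  by rewrite E' in ot; case: (odd t0) ot.
have gt1 : t <> t0.+1 by move=> E'; rewrite E' in Pt; lia.
have gt2 : t <> t0.+2 by move=> E'; rewrite E' oddSS in ot; case: (odd t0) ot.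
have gt3 : (t < k.*2 - p)%N.
  case: (ltnP t (k.*2 - p)) => // h.
  have := wide_suffix (i := (k.*2 - 1 - t)%N) ltac:(lia).
  rewrite (_ : k.*2 - 1 - (k.*2 - 1 - t) = t)%N; last lia.
  by rewrite Pt /t0 in hd *; lia.
have [t'' [h1 h2 h3]] := unit_steps_ivt_up (v := (p + j)%N%:Z + 1) st (i := t)
  (j := (k.*2 - p)%N) ltac:(lia) ltac:(lia) ltac:(lia) ltac:(rewrite PNp /t0 in hd *; lia).
have ht'' : t <> t'' by move=> E'; rewrite -E' Pt in h3; lia.
have [c d'] := st t0.+1 ltac:(lia).
have : P t0.+2 = (p + j)%N%:Z \/ P t0.+2 = (p + j)%N%:Z + 1 \/ P t0.+2 = (p + j)%N%:Z + 2.
  lia.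
case=> [E|[E|E]].
- have := lw_parity_separated W (i := t0) (j := t0.+2) ltac:(lia) ltac:(lia) ltac:(lia) ltac:(lia).
  by rewrite oddSS; case: (odd _).
- exact: (NT t0.+1 t0.+2 t'' ltac:(lia) ltac:(lia) ltac:(lia) ltac:(lia) ltac:(lia)).
- have [t1 [i1 i2 i3]] := unit_steps_ivt_down (v := (p + j)%N%:Z + 1) st (i := t0.+2) (j := t)
    ltac:(lia) ltac:(lia) ltac:(lia) ltac:(lia).
  have n3 : t1 <> t0.+2 by move=> E'; rewrite E' in i3; lia.
  have n4 : t1 <> t by move=> E'; rewrite E' in i3; lia.
  exact: (NT t0.+1 t1 t'' ltac:(lia) ltac:(lia) ltac:(lia) ltac:(lia) ltac:(lia)).
Qed.

Lemma wide_middle_step_even j : (p + (2 * j).+1 <= k.*2 - p)%N ->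
  (forall t, (p <= t)%N -> (t <= p + 2 * j)%N -> P t = (p + (t - p) %/ 2)%N%:Z) ->
  P (p + 2 * j).+1 = (p + j)%N%:Z.
Proof.
move=> hd IHv.
have rise := wide_middle_even_no_rise hd IHv.
set t0 := (p + 2 * j)%N in hd IHv rise *.
have [a b] := lw_steps W (j := t0) ltac:(lia).
have Pt0 : P t0 = (p + j)%N%:Z.
  by rewrite (IHv t0) /t0 ?leq_addr //; congr (_%:Z); lia.
have Pt0m : P t0.-1 = (p + j)%N%:Z - 1.
  case: j {rise} @t0 hd IHv Pt0 a b => [|j] t0 hd IHv Pt0 a b.
    rewrite (_ : t0.-1 = p - 1)%N /t0; last lia.
    by rewrite wide_prefix; lia.
  rewrite (IHv t0.-1) /t0; [|lia|lia].
  by rewrite (_ : (p + 2 * j.+1).-1 - p = (2 * j).+1)%N; lia.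
have fall : P t0.+1 <> (p + j)%N%:Z - 1.
  move=> e.
  have := lw_parity_separated W (i := t0.-1) (j := t0.+1) ltac:(lia) ltac:(lia) ltac:(lia) ltac:(lia).
  by rewrite (_ : t0.+1 = (t0.-1).+2)%N /t0 ?oddSS; [case: (odd _)|lia].
lia.
Qed.

Lemma wide_middle_step_odd j : (p + (2 * j).+2 <= k.*2 - p)%N ->
  (forall t, (p <= t)%N -> (t <= p + (2 * j).+1)%N -> P t = (p + (t - p) %/ 2)%N%:Z) ->
  P (p + (2 * j).+1).+1 = (p + j.+1)%N%:Z.
Proof.
move=> hd IHv.
have NT := lw_no_triple W.
set t0 := (p + (2 * j).+1)%N in hd IHv *.
have [a b] := lw_steps W (j := t0) ltac:(lia).
have Pt0 : P t0 = (p + j)%N%:Z.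
  by rewrite (IHv t0) /t0 ?leq_addr //; congr (_%:Z); lia.
have Pt0m : P t0.-1 = (p + j)%N%:Z.
  by rewrite (IHv t0.-1) /t0; [congr (_%:Z); lia|lia|lia].
have flat : P t0.+1 <> (p + j)%N%:Z.
  by move=> e; exact: (NT t0.-1 t0 t0.+1 ltac:(lia) ltac:(lia) ltac:(lia) ltac:(lia) ltac:(lia)).
have fall : P t0.+1 <> (p + j)%N%:Z - 1.
  move=> e; clear flat.
  case: j @t0 hd IHv Pt0 Pt0m a b e => [|j] t0 hd IHv Pt0 Pt0m a b e.
    have Ppm := wide_prefix (i := (p - 1)%N) ltac:(lia).
    have := wide_unique (t1 := (p - 1)%N) (t2 := t0.+1) ltac:(lia) ltac:(lia)
      ltac:(left; lia) ltac:(lia).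
    by rewrite /t0; lia.
  have q2 : P (t0 - 2)%N = (p + j)%N%:Z.
    by rewrite (IHv (t0 - 2)%N) /t0; [congr (_%:Z); lia|lia|lia].
  have q3 : P (t0 - 3)%N = (p + j)%N%:Z.
    by rewrite (IHv (t0 - 3)%N) /t0; [congr (_%:Z); lia|lia|lia].
  exact: (NT (t0 - 3)%N (t0 - 2)%N t0.+1 ltac:(rewrite /t0; lia) ltac:(rewrite /t0; lia)
    ltac:(lia) ltac:(lia) ltac:(lia)).
lia.
Qed.

Lemma wide_middle t : (p <= t)%N -> (t <= k.*2 - p)%N -> P t = (p + (t - p) %/ 2)%N%:Z.
Proof.
suff mid : forall d, (p + d <= k.*2 - p)%N -> forall t, (p <= t)%N -> (t <= p + d)%N ->
    P t = (p + (t - p) %/ 2)%N%:Z.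
  by move=> h1 h2; apply: (mid (k.*2 - p - p)%N); lia.
elim => [|d IH] hd {}t ht1 ht2.
  have -> : t = p by lia.
  by rewrite wide_prefix // subnn div0n addn0.
case: (ltnP t (p + d.+1)) => htt; first by apply: IH; lia.
have -> : t = (p + d).+1 by lia.
have {}IH := IH ltac:(lia).
have [j [ej|ej]] : exists j, d = (2 * j)%N \/ d = (2 * j).+1.
  by exists (d %/ 2)%N; lia.
- subst d; rewrite wide_middle_step_even //.
  by congr (_%:Z); lia.
- subst d; rewrite wide_middle_step_odd //.
  by congr (_%:Z); lia.
Qed.

Lemma wide_p_even : ~~ odd p.
Proof.
have := lw_antipodal_parity W (i := 0%N) (j := (k.*2 - p)%N) ltac:(lia) ltac:(lia)
  ltac:(left; rewrite wide_antipode_of_zero (lw_P0 W); lia).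
rewrite oddB ?leq_double ?odd_double /=; last lia.
by move/esym => ->.
Qed.

Lemma wide_diffs : diffs P (k.*2 - 1) = pw p 1 ++ pairs (k - p) 0 1 ++ pw (p - 1) 1.
Proof.
rewrite (_ : k.*2 - 1 = p + (2 * (k - p) + (p - 1)))%N; last lia.
rewrite diffs_cat diffs_cat.
have E1 : diffs P p = pw p 1.
  apply: diffs_const => i hi.
  by rewrite (wide_prefix (i := i.+1)) ?(wide_prefix (i := i)); lia.
have E2 : diffs (fun i => P (p + i)%N) (2 * (k - p)) = pairs (k - p) 0 1.
  apply: diffs_pairs => i hi.
  by rewrite !wide_middle; try lia; split; lia.
have E3 : diffs (fun i => P (p + (2 * (k - p) + i))%N) (p - 1) = pw (p - 1) 1.
  apply: diffs_const => i hi.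
  rewrite (_ : p + (2 * (k - p) + i.+1) = k.*2 - 1 - (p - 2 - i))%N; last lia.
  rewrite (_ : p + (2 * (k - p) + i) = k.*2 - 1 - (p - 1 - i))%N; last lia.
  by rewrite !wide_suffix; lia.
by rewrite E1 E2 E3.
Qed.

End WideWalk.

(* The entries of d_* sum to 0 modulo 2k: the cyclic differences of the row telescope. *)
Definition closing_congr (k : nat) (P : nat -> int) (h : int) :=
  exists c : int, h + P (k.*2 - 1)%N = c * (k.*2)%:Z.

Lemma wide_walk_ends k P h a0 b0 : latin_walk k P -> 0 <= h -> h < k%:Z ->
  closing_congr k P h -> (a0 < k.*2)%N -> (b0 < k.*2)%N ->
  (forall j, (j < k.*2)%N -> P j <= P a0) -> (forall j, (j < k.*2)%N -> P b0 <= P j) ->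
  k%:Z <= P a0 - P b0 -> b0 = 0%N /\ a0 = (k.*2 - 1)%N.
Proof.
move=> W h0 hk [c hc] ha hb Ha Hb hW.
have k3 := lw_k W; have st := lw_steps W.
have [cb [hcb ecb]] := unit_steps_hit (v := P b0 + k%:Z) st hb ha ltac:(left; lia).
have eb := lw_extreme_end W hb hcb ltac:(left; lia) (or_introl Hb).
have [ca [hca eca]] := unit_steps_hit (v := P a0 - k%:Z) st hb ha ltac:(left; lia).
have ea := lw_extreme_end W ha hca ltac:(right; lia) (or_intror Ha).
case: eb => eb; case: ea => ea; subst; [lia|by []| |lia].
have /andP[b1 b2] := lw_bound W (j := (k.*2 - 1)%N) ltac:(lia).
have P0 := lw_P0 W.
have := @small_multiple_eq0 (h + P (k.*2 - 1)%N + (k.*2)%:Z) (c + 1) (k.*2)%:Z ltac:(lia).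
by rewrite mulrDl mul1r -hc => /(_ erefl); lia.
Qed.

Lemma wide_walk_shape k P h : latin_walk k P -> 0 <= h -> h < k%:Z -> closing_congr k P h ->
  (forall j, (j < k.*2)%N -> 0 <= P j) ->
  (forall j, (j < k.*2)%N -> P j <= P (k.*2 - 1)%N) -> k%:Z <= P (k.*2 - 1)%N ->
  ext_row_shape k.*2 k (diffs P (k.*2 - 1) ++ [:: h]) h (diffs P (k.*2 - 1)).
Proof.
move=> W h0 hk [c hc] P_ge0 P_le_end P_wide.
have [p [P_end hp]] : exists p : nat, P (k.*2 - 1)%N = (k + p)%N%:Z - 1 /\ (1 <= p <= k)%N.
  exists (absz (P (k.*2 - 1)%N - k%:Z + 1)).
  by have := lw_bound W (j := (k.*2 - 1)%N) ltac:(lia); lia.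
have pev := wide_p_even W P_end hp P_le_end.
have hp2 : (2 <= p)%N by lia.
have hv : h = (k - p + 1)%N%:Z.
  have := @small_multiple_eq0 (h + P (k.*2 - 1)%N - (k.*2)%:Z) (c - 1) (k.*2)%:Z ltac:(lia).
  by rewrite mulrBl mul1r -hc => /(_ erefl); lia.
have ED := wide_diffs W P_end hp P_ge0 P_le_end.
right; right; left.
split; first lia.
split.
  by rewrite ED !all_cat; apply/and3P; split; [apply: all_pw|apply: all_pairs|apply: all_pw].
exists (k - p + 1)%N; split => //.
split; first lia.
split; first by move/eqP; lia.
split; first by move/eqP; lia.
rewrite ED hv -!catA.
rewrite (_ : k - (k - p + 1) + 1 = p)%N; last lia.
rewrite (_ : k - p + 1 - 1 = k - p)%N; last lia.
by rewrite (_ : k - (k - p + 1) = p - 1)%N; last lia.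
Qed.

Lemma narrow_prefix k P a : latin_walk k P -> (a < k.*2)%N ->
  (forall j, (j < k.*2)%N -> P j <= P a) -> (forall j, (j < a)%N -> P j <> P a) ->
  P (k.*2 - 1)%N <= 0 -> forall i, (i <= a)%N -> P i = i%:Z.
Proof.
move=> W ha Ha Hf Pe.
have st := lw_steps W; have NT := lw_no_triple W.
suff pre : forall j, (j <= a)%N -> forall i, (i <= j)%N -> P i = i%:Z.
  by move=> i hi; exact: pre hi i (leqnn _).
elim => [|j IH] hj i hi.
  have -> : i = 0%N by lia.
  exact: lw_P0 W.
case: (ltnP i j.+1) => hij; first by apply: IH; lia.
have ei : i = j.+1 by lia.
subst i; clear hi hij.
have Pj := IH ltac:(lia) j (leqnn _).
have jM : j%:Z < P a by have := Ha j ltac:(lia); have := Hf j ltac:(lia); lia.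
have [t2 [h1 h2 h3]] := unit_steps_ivt_down (v := j%:Z) st (i := a) (j := (k.*2 - 1)%N)
  ltac:(lia) ltac:(lia) ltac:(lia) ltac:(lia).
have t2a : a <> t2 by move=> E; rewrite -E in h3; lia.
have [s1 s2] := st j ltac:(lia).
have flat : P j.+1 <> j%:Z.
  by move=> e; exact: (NT j j.+1 t2 ltac:(lia) ltac:(lia) ltac:(lia) ltac:(lia) ltac:(lia)).
have fall : P j.+1 <> j%:Z - 1.
  case: j IH hj Pj jM h3 s1 s2 flat => [|j] IH hj Pj jM h3 s1 s2 flat e.
    have [t1 [g1 g2 g3]] := unit_steps_ivt_up (v := 0) st (i := 1%N) (j := a)
      ltac:(lia) ltac:(lia) ltac:(lia) ltac:(lia).
    have t1a : t1 <> a by move=> E; rewrite E in g3; lia.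
    have t11 : t1 <> 1%N by move=> E; rewrite E in g3; lia.
    exact: (NT 0%N t1 t2 ltac:(lia) ltac:(lia) ltac:(lia) ltac:(rewrite (lw_P0 W); lia) ltac:(lia)).
  have Pj' := IH ltac:(lia) j ltac:(lia).
  have := lw_parity_separated W (i := j) (j := j.+2) ltac:(lia) ltac:(lia) ltac:(lia) ltac:(lia).
  by rewrite oddSS; case: (odd j).
lia.
Qed.

Section NarrowTop.

Variables (k a : nat) (P : nat -> int).
Hypotheses (W : latin_walk k P) (a_pos : (1 <= a)%N)
  (P_prefix : forall i, (i <= a)%N -> P i = i%:Z)
  (P_le_a : forall j, (j < k.*2)%N -> P j <= a%:Z)
  (P_first : forall j, (j < a)%N -> P j <> a%:Z)
  (P_ge : forall j, (j < k.*2)%N -> a%:Z + 1 - k%:Z <= P j)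
  (P_hit : forall (v : int) (b : bool), a%:Z + 1 - k%:Z <= v -> v <= a%:Z ->
     exists t, [/\ (t < k.*2)%N, P t = v & odd t = b]).

Lemma narrow_a_le : (a <= k - 1)%N.
Proof. by have := P_ge (j := 0%N) ltac:(have := lw_k W; lia); rewrite (lw_P0 W); lia. Qed.

Lemma narrow_flat : P a.+1 = a%:Z.
Proof.
have st := lw_steps W; have NT := lw_no_triple W.
have ak := narrow_a_le.
have Pa := P_prefix (leqnn a).
have Pam := P_prefix (i := a.-1) ltac:(lia).
have [s1 s2] := st a ltac:(lia).
have [s3 s4] := st a.-1 ltac:(lia).
rewrite prednK in s3 s4; last lia.
have s5 := P_le_a (j := a.+1) ltac:(lia).
case: (eqVneq (P a.+1) a%:Z) => // ne; exfalso.
have e1 : P a.+1 = a%:Z - 1 by lia.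
have [t' [ht' Pt' ot']] := P_hit (v := a%:Z) (~~ odd a) ltac:(lia) ltac:(lia).
have gt : (a < t')%N.
  case: (ltngtP a t') => // h; first by case: (P_first h Pt').
  by move: ot'; rewrite -h; case: (odd a).
have ne1 : t' <> a.+1 by move=> E; rewrite E in Pt'; lia.
have ne2 : t' <> a.+2 by move=> E; move: ot'; rewrite E oddSS; case: (odd a).
have [s6 s7] := st t'.-1 ltac:(lia).
rewrite prednK in s6 s7; last lia.
have s8 := P_le_a (j := t'.-1) ltac:(lia).
case: (eqVneq (P t'.-1) a%:Z) => E.
  exact: (NT a t'.-1 t' ltac:(lia) ltac:(lia) ht' (etrans Pa (esym E)) (etrans E (esym Pt'))).
exact: (NT a.-1 a.+1 t'.-1 ltac:(lia) ltac:(lia) ltac:(lia) ltac:(lia) ltac:(lia)).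
Qed.

Lemma narrow_descent i : (i <= a)%N -> P (a.+1 + i)%N = a%:Z - i%:Z.
Proof.
have st := lw_steps W; have NT := lw_no_triple W.
have ak := narrow_a_le.
suff desc : forall j, (j <= a)%N -> forall i, (i <= j)%N -> P (a.+1 + i)%N = a%:Z - i%:Z.
  by move=> hi; exact: desc hi i (leqnn _).
elim => [|j IH] hj {}i hi.
  have -> : i = 0%N by lia.
  by rewrite addn0 narrow_flat; lia.
case: (ltnP i j.+1) => hij; first by apply: IH; lia.
have ei : i = j.+1 by lia.
subst i; clear hi hij.
have Pj := IH ltac:(lia) j (leqnn _).
have [s1 s2] := st (a.+1 + j)%N ltac:(lia).
rewrite -addnS in s1 s2.
have rise : P (a.+1 + j.+1)%N <> P (a.+1 + j)%N + 1.
  case: j IH hj Pj s1 s2 => [|j] IH hj Pj s1 s2 e.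
    by have := P_le_a (j := (a.+1 + 1)%N) ltac:(lia); lia.
  have Pj' := IH ltac:(lia) j ltac:(lia).
  have := lw_parity_separated W (i := (a.+1 + j)%N) (j := (a.+1 + j.+2)%N)
    ltac:(lia) ltac:(lia) ltac:(lia) ltac:(lia).
  by rewrite !addnS oddSS; case: (odd _).
have flat : P (a.+1 + j.+1)%N <> P (a.+1 + j)%N.
  clear rise; case: j IH hj Pj s1 s2 => [|j] IH hj Pj s1 s2 e.
    rewrite addn0 in Pj e.
    have Pa := P_prefix (leqnn a).
    exact: (NT a a.+1 (a.+1 + 1)%N ltac:(lia) ltac:(lia) ltac:(lia) ltac:(lia) ltac:(lia)).
  have Pa' := P_prefix (i := (a - j.+1)%N) ltac:(lia).
  exact: (NT (a - j.+1)%N (a.+1 + j.+1)%N (a.+1 + j.+2)%N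
    ltac:(lia) ltac:(lia) ltac:(lia) ltac:(lia) ltac:(lia)).
lia.
Qed.

Lemma narrow_head_end : P a.*2.+1 = 0.
Proof.
have := narrow_descent (leqnn a).
by rewrite (_ : a.+1 + a = a.*2.+1)%N; lia.
Qed.

Lemma narrow_head_diffs : diffs P a.*2.+1 = pw a 1 ++ [:: 0] ++ pw a (-1).
Proof.
rewrite (_ : a.*2.+1 = a + (1 + a))%N; last lia.
rewrite diffs_cat diffs_cat.
have E1 : diffs P a = pw a 1.
  by apply: diffs_const => i hi; rewrite (P_prefix hi) (P_prefix (ltnW hi)); lia.
have E2 : diffs (fun i => P (a + i)%N) 1 = [:: 0].
  rewrite diffs1 addn0 addn1 (P_prefix (leqnn a)).
  by have := narrow_descent (leq0n a); rewrite addn0 => ->; congr [:: _]; lia.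
have E3 : diffs (fun i => P (a + (1 + i))%N) a = pw a (-1).
  apply: diffs_const => i hi.
  rewrite (_ : a + (1 + i.+1) = a.+1 + i.+1)%N; last lia.
  rewrite (_ : a + (1 + i) = a.+1 + i)%N; last lia.
  by rewrite (narrow_descent hi) (narrow_descent (ltnW hi)); lia.
by rewrite E1 E2 E3.
Qed.

Section NarrowTail.

Hypothesis a_short : (a.*2.+2 < k.*2)%N.

Lemma narrow_after_head : P a.*2.+2 = -1.
Proof.
have NT := lw_no_triple W.
have [s1 s2] := lw_steps W a_short.
rewrite narrow_head_end in s1 s2.
have flat : P a.*2.+2 <> 0.
  move=> e; have P0 := lw_P0 W; have P2a1 := narrow_head_end.
  exact: (NT 0%N a.*2.+1 a.*2.+2 ltac:(lia) ltac:(lia) a_short ltac:(lia) ltac:(lia)).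
have rise : P a.*2.+2 <> 1.
  move=> e.
  have P2a : P a.*2 = 1.
    have := narrow_descent (i := a.-1) ltac:(lia).
    by rewrite (_ : a.+1 + a.-1 = a.*2)%N; lia.
  have := lw_parity_separated W (i := a.*2) (j := a.*2.+2) ltac:(lia) ltac:(lia) ltac:(lia) ltac:(lia).
  by rewrite oddSS; case: (odd _).
lia.
Qed.

Lemma narrow_tail_confined :
  confined_walk (k - a - 1) (fun i => P (a.*2.+2 + i)%N + 1).
Proof.
have st := lw_steps W; have NT := lw_no_triple W.
have sh : forall i, odd (a.*2.+2 + i) = odd i by move=> i; rewrite oddD /= odd_double.
constructor.
- lia.
- by rewrite addn0 narrow_after_head.
- move=> j hj; have [s1 s2] := st (a.*2.+2 + j)%N ltac:(lia).
  by rewrite -addnS in s1 s2; lia.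
- move=> i hi.
  have lo := P_ge (j := (a.*2.+2 + i)%N) ltac:(lia).
  suff : P (a.*2.+2 + i)%N < 0 by lia.
  case: (ltrP (P (a.*2.+2 + i)%N) 0) => // hge; exfalso.
  pose v := absz (P (a.*2.+2 + i)%N).
  have ev : P (a.*2.+2 + i)%N = v%:Z by rewrite /v; lia.
  have va : (v <= a)%N by have := P_le_a (j := (a.*2.+2 + i)%N) ltac:(lia); lia.
  have p1 := P_prefix va.
  have p2 := narrow_descent (i := (a - v)%N) ltac:(lia).
  exact: (NT v (a.+1 + (a - v))%N (a.*2.+2 + i)%N
    ltac:(lia) ltac:(lia) ltac:(lia) ltac:(lia) ltac:(lia)).
- move=> i j hi hj nij e.
  have := lw_parity_separated W (i := (a.*2.+2 + i)%N) (j := (a.*2.+2 + j)%N)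
    ltac:(lia) ltac:(lia) ltac:(lia) ltac:(lia).
  by rewrite !sh.
- move=> v b hv1 hv2.
  have [t [ht Pt ot]] := P_hit (v := v - 1) b ltac:(lia) ltac:(lia).
  have gt : (a.*2.+2 <= t)%N.
    case: (leqP a.*2.+2 t) => // h1; exfalso.
    case: (leqP t a) => h2; first by have := P_prefix h2; lia.
    have := narrow_descent (i := (t - a.+1)%N) ltac:(lia).
    by rewrite (_ : a.+1 + (t - a.+1) = t)%N; lia.
  exists (t - a.*2.+2)%N; rewrite (_ : a.*2.+2 + (t - a.*2.+2) = t)%N; last lia.
  by split; [lia|lia|rewrite -sh (_ : a.*2.+2 + (t - a.*2.+2) = t)%N; lia].
Qed.

End NarrowTail.

Lemma narrow_shape_top_later (h : int) : h = - P (k.*2 - 1)%N ->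
  ext_row_shape k.*2 k (diffs P (k.*2 - 1) ++ [:: h]) h (diffs P (k.*2 - 1)).
Proof.
move=> hv.
have ak := narrow_a_le.
have ED0 := narrow_head_diffs.
have P2a1 := narrow_head_end.
case: (ltnP a.*2.+2 k.*2) => a_short; last first.
  have eN : (k.*2 - 1 = a.*2.+1)%N by lia.
  left; split; first by rewrite hv eN P2a1.
  left; exists 0%N.
  by rewrite eN ED0 hv eN P2a1 (_ : k - 1 = a)%N; [rewrite /= -!catA|lia].
have P2a2 := narrow_after_head a_short.
have CW := narrow_tail_confined a_short.
have [r [u [ru EDQ QE]]] := confined_walk_diffs CW.
have hr : h = r.+1%:Z.
  move: QE; rewrite hv (_ : a.*2.+2 + ((k - a - 1).*2 - 1) = k.*2 - 1)%N; lia.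
have ED : diffs P (k.*2 - 1) =
    pw a 1 ++ [:: 0] ++ pw a.+1 (-1) ++ diffs (fun i => P (a.*2.+2 + i)%N + 1) ((k - a - 1).*2 - 1).
  rewrite (_ : k.*2 - 1 = a.*2.+2 + ((k - a - 1).*2 - 1))%N; last lia.
  rewrite diffs_cat diffs_shift (_ : a.*2.+2 = a.*2.+1 + 1)%N; last lia.
  by rewrite diffs_cat ED0 diffs1 addn0 addn1 P2a1 P2a2 subr0 -!catA /= cat_pw_cons.
right; right; right.
split; first lia.
split; first by rewrite ED !mem_cat inE eqxx !orbT.
split; first by rewrite ED mem_cat (mem_pw _ a_pos).
split; first by rewrite ED !mem_cat (mem_pw _ (isT : (0 < a.+1)%N)) !orbT.
exists r.+1, a; do 3 (split; first lia).
rewrite (_ : k - r.+1 - a - 1 = u)%N; last lia.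
by rewrite ED EDQ hr subn1 /= -!catA /= -!catA.
Qed.

End NarrowTop.

Lemma narrow_shape k P h a0 b0 : latin_walk k P -> 0 <= h -> h < k%:Z -> closing_congr k P h ->
  (a0 < k.*2)%N -> (b0 < k.*2)%N ->
  (forall j, (j < k.*2)%N -> P j <= P a0) -> (forall j, (j < k.*2)%N -> P b0 <= P j) ->
  P a0 - P b0 < k%:Z ->
  ext_row_shape k.*2 k (diffs P (k.*2 - 1) ++ [:: h]) h (diffs P (k.*2 - 1)).
Proof.
move=> W h0 hk [c hc] ha hb Ha Hb hW.
have k3 := lw_k W; have P0 := lw_P0 W.
have range : P a0 - P b0 = k%:Z - 1.
  case: (lerP (k%:Z - 1) (P a0 - P b0)) => hW'; first lia.
  have [t [ht Pt _]] := lw_surj W (v := P a0 + 1) true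
    ltac:(move=> j hj; have := Ha j hj; have := Hb j hj; lia).
  by have := Ha t ht; lia.
have hit : forall (v : int) (b : bool), P b0 <= v -> v <= P a0 ->
    exists t, [/\ (t < k.*2)%N, P t = v & odd t = b].
  by move=> v b h1 h2; apply: (lw_surj W) => j hj; have := Ha j hj; have := Hb j hj; lia.
have [Pe hv] : P (k.*2 - 1)%N <= 0 /\ h = - P (k.*2 - 1)%N.
  have := Ha (k.*2 - 1)%N ltac:(lia); have := Hb (k.*2 - 1)%N ltac:(lia).
  have := Ha 0%N ltac:(lia); have := Hb 0%N ltac:(lia).
  have := @small_multiple_eq0 (h + P (k.*2 - 1)%N) c (k.*2)%:Z ltac:(lia) hc.
  lia.
have [a [Pa aa0 P_first]] : exists a,
    [/\ P a = P a0, (a <= a0)%N & forall j, (j < a)%N -> P j <> P a].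
  case: (ex_minnP (ex_intro (fun a => P a == P a0) a0 (eqxx _))) => a /eqP Pa amin.
  exists a; split => //; first exact: amin.
  by move=> j hj E; have := amin j; rewrite E Pa eqxx => /(_ isT); lia.
have P_prefix := narrow_prefix W (a := a) ltac:(lia) ltac:(move=> j hj; rewrite Pa; exact: Ha)
  P_first Pe.
have PA := P_prefix a (leqnn _).
case: a Pa aa0 P_first P_prefix PA => [|a] Pa aa0 P_first P_prefix PA.
  apply: confined_shape hv k3; constructor => //; first lia.
  - exact: lw_steps W.
  - by move=> i hi; have := Ha i hi; have := Hb i hi; lia.
  - exact: lw_parity_separated W.
  - by move=> v b h1 h2; apply: hit; lia.
apply: (narrow_shape_top_later (a := a.+1) W) => //.
- by move=> j hj; have := Ha j hj; lia.
- by move=> j hj; rewrite -PA; exact: P_first.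
- by move=> j hj; have := Hb j hj; lia.
- by move=> v b h1 h2; apply: hit; lia.
Qed.

Lemma latin_walk_shape k P (h : int) : latin_walk k P -> 0 <= h -> h < k%:Z ->
  closing_congr k P h ->
  ext_row_shape k.*2 k (diffs P (k.*2 - 1) ++ [:: h]) h (diffs P (k.*2 - 1)).
Proof.
move=> W h0 hk hc.
have k3 := lw_k W.
have [a0 [ha Ha]] := @exists_argmax P k.*2 ltac:(lia).
have [b0 [hb Hb]] := @exists_argmin P k.*2 ltac:(lia).
case: (ltrP (P a0 - P b0) k%:Z) => hW; first exact: (narrow_shape W h0 hk hc ha hb Ha Hb hW).
have [eb ea] := wide_walk_ends W h0 hk hc ha hb Ha Hb hW; subst a0 b0.
apply: (wide_walk_shape W h0 hk hc) => //.
- by move=> j hj; rewrite -(lw_P0 W); exact: Hb.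
- by move: hW; rewrite (lw_P0 W); lia.
Qed.

Definition row_eps (k : nat) (s : seq nat) (j : nat) : int := hdiff k.*2 s j - k%:Z.
Definition row_walk (k : nat) (s : seq nat) (j : nat) : int := \sum_(i < j) row_eps k s i.

Lemma row_walk0 k s : row_walk k s 0 = 0.
Proof. by rewrite /row_walk big_ord0. Qed.

Lemma row_walkS k s j : row_walk k s j.+1 = row_walk k s j + row_eps k s j.
Proof. by rewrite /row_walk big_ord_recr. Qed.

Lemma latin_row_size n s : latin_row n s -> size s = n.
Proof. by move=> L; rewrite (perm_size L) size_iota. Qed.

Lemma latin_row_nth_range n s j : latin_row n s -> (j < n)%N -> (1 <= nth 0%N s j <= n)%N.
Proof.
move=> L hj.
have : nth 0%N s j \in iota 1 n by rewrite -(perm_mem L) mem_nth // (latin_row_size L).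
by rewrite mem_iota; lia.
Qed.

Lemma latin_row_eq_of_congr n s i j : latin_row n s -> (i < n)%N -> (j < n)%N ->
  (exists c : int, (nth 0%N s j)%:Z - (nth 0%N s i)%:Z = c * n%:Z) -> i = j.
Proof.
move=> L hi hj [c hc].
have ri := latin_row_nth_range L hi; have rj := latin_row_nth_range L hj.
have e : nth 0%N s i = nth 0%N s j.
  by have := @small_multiple_eq0 _ c n%:Z ltac:(lia) hc; lia.
have u : uniq s by rewrite (perm_uniq L) iota_uniq.
by apply/eqP; rewrite -(nth_uniq 0%N _ _ u) ?(latin_row_size L) // e.
Qed.

Lemma row_nth_congr k s j : (j < k.*2)%N -> exists c : int,
  (nth 0%N s j)%:Z = (nth 0%N s 0)%:Z + j%:Z * k%:Z + row_walk k s j + c * (k.*2)%:Z.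
Proof.
elim: j => [|j IH] hj; first by exists 0; rewrite row_walk0; lia.
have [c hc] := IH (ltnW hj).
have Ehd : hdiff k.*2 s j = (((nth 0%N s j.+1)%:Z - (nth 0%N s j)%:Z) %% (k.*2)%:Z)%Z.
  by rewrite /hdiff modn_small.
have := divz_eq ((nth 0%N s j.+1)%:Z - (nth 0%N s j)%:Z) (k.*2)%:Z.
rewrite -Ehd => Hq.
exists (c + (((nth 0%N s j.+1)%:Z - (nth 0%N s j)%:Z) %/ (k.*2)%:Z)%Z).
by rewrite row_walkS /row_eps; lia.
Qed.

Lemma opposite_residues_near_half (k : nat) (a b u w q1 q2 : int) : (3 <= k)%N ->
  0 <= u -> 0 <= w -> u < (k.*2)%:Z -> w < (k.*2)%:Z ->
  a - b = q1 * (k.*2)%:Z + u -> b - a = q2 * (k.*2)%:Z + w ->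
  (k - 1 <= absz u)%N -> (k - 1 <= absz w)%N -> -1 <= w - k%:Z /\ w - k%:Z <= 1.
Proof.
move=> k3 u0 w0 u1 w1 e1 e2 c1 c2.
have := @small_multiple_eq0 (u + w - (k.*2)%:Z) (- q1 - q2 - 1) (k.*2)%:Z ltac:(lia) ltac:(lia).
by move=> /(_ ltac:(lia) ltac:(lia)); lia.
Qed.

Lemma latin_row_steps k s : (3 <= k)%N -> inner_distance k.*2 s = (k - 1)%N ->
  unit_steps k.*2 (row_walk k s).
Proof.
move=> k3 Hid j hj.
have : (k - 1 <= cdist k.*2 (nth 0%N s j) (nth 0%N s j.+1))%N.
  have hj' : (j < (k.*2).-1)%N by lia.
  rewrite -Hid /inner_distance -minEnat.
  exact: (bigmin_le _ (Ordinal hj')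
    (fun i : 'I_(k.*2).-1 => cdist k.*2 (nth 0%N s i) (nth 0%N s i.+1))).
rewrite /cdist leq_min => /andP[c1 c2].
rewrite row_walkS /row_eps /hdiff modn_small //.
have nz : (k.*2)%:Z != 0 by lia.
have pz : 0 < (k.*2)%:Z by lia.
have := opposite_residues_near_half k3 (modz_ge0 _ nz) (modz_ge0 _ nz) (ltz_pmod _ pz)
  (ltz_pmod _ pz) (divz_eq _ _) (divz_eq _ _) c1 c2.
lia.
Qed.

Lemma parity_window_eq (k : nat) (o b : bool) (d c : int) : (0 < k)%N ->
  - k%:Z < d -> d < k%:Z -> ((o : nat)%:Z - (b : nat)%:Z) * k%:Z + d = c * (k.*2)%:Z ->
  o = b /\ d = 0.
Proof.
move=> k0 lo hi e.
have m0 : 0 < (k.*2)%:Z by lia.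
case: o b e => [] [] /= e.
- by split => //; apply: (small_multiple_eq0 m0 (c := c)); lia.
- by have := @small_multiple_eq0 (k%:Z + d) c _ m0; lia.
- by have := @small_multiple_eq0 (d - k%:Z) c _ m0; lia.
- by split => //; apply: (small_multiple_eq0 m0 (c := c)); lia.
Qed.

Section LatinRowWalk.

Variables (k : nat) (s : seq nat).
Hypotheses (k3 : (3 <= k)%N) (L : latin_row k.*2 s).

Lemma latin_row_eq_odd i j : (i < j)%N -> (j < k.*2)%N ->
  row_walk k s i = row_walk k s j -> odd (j - i).
Proof.
move=> hij hj e; apply: contraT => ev.
have [t ht] : exists t, j = (i + 2 * t)%N by exists ((j - i) %/ 2)%N; lia.
suff : i = j by lia.
apply: (latin_row_eq_of_congr L) => //; first lia.
have [ci hci] := @row_nth_congr k s i ltac:(lia).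
have [cj hcj] := row_nth_congr s hj.
have jk : j%:Z * k%:Z = i%:Z * k%:Z + t%:Z * (k.*2)%:Z by clear -ht; subst j; nia.
by exists (cj - ci + t%:Z); lia.
Qed.

Lemma latin_row_odd_not_antipodal i j : (i < j)%N -> (j < k.*2)%N -> odd (j - i) ->
  row_walk k s j - row_walk k s i <> k%:Z /\ row_walk k s j - row_walk k s i <> - k%:Z.
Proof.
move=> hij hj od.
have [t ht] : exists t, j = (i + (2 * t).+1)%N by exists ((j - i) %/ 2)%N; lia.
have [ci hci] := @row_nth_congr k s i ltac:(lia).
have [cj hcj] := row_nth_congr s hj.
have jk : j%:Z * k%:Z = i%:Z * k%:Z + t%:Z * (k.*2)%:Z + k%:Z by clear -ht; subst j; nia.
have neq : ~ exists c : int, (nth 0%N s j)%:Z - (nth 0%N s i)%:Z = c * (k.*2)%:Z.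
  by move=> ex; have := latin_row_eq_of_congr L (i := i) ltac:(lia) hj ex; lia.
split => e; apply: neq.
  by exists (cj - ci + t%:Z + 1); lia.
by exists (cj - ci + t%:Z); lia.
Qed.

Lemma latin_row_surj (v : int) (b : bool) :
  (forall j, (j < k.*2)%N -> v - k%:Z < row_walk k s j /\ row_walk k s j < v + k%:Z) ->
  exists j, [/\ (j < k.*2)%N, row_walk k s j = v & odd j = b].
Proof.
move=> Hv.
set y := (nth 0%N s 0)%:Z + v + (b : nat)%:Z * k%:Z - 1.
have r0 := @modz_ge0 y (k.*2)%:Z ltac:(lia).
have r1 := @ltz_pmod y (k.*2)%:Z ltac:(lia).
have ey := divz_eq y (k.*2)%:Z.
have yE : y = (nth 0%N s 0)%:Z + v + (b : nat)%:Z * k%:Z - 1 by [].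
have ym : absz ((y %% (k.*2)%:Z)%Z + 1) \in s by rewrite (perm_mem L) mem_iota; lia.
pose j := index (absz ((y %% (k.*2)%:Z)%Z + 1)) s.
have hj : (j < k.*2)%N by rewrite -(latin_row_size L) index_mem.
have ej : nth 0%N s j = absz ((y %% (k.*2)%:Z)%Z + 1) by rewrite nth_index.
have [c hc] := @row_nth_congr k s j hj.
have [lo hi] := Hv j hj.
have [t ht] : exists t, j = (2 * t + odd j)%N by exists (j %/ 2)%N; lia.
have jk : j%:Z * k%:Z = t%:Z * (k.*2)%:Z + (odd j : nat)%:Z * k%:Z.
  by move: ht; set o := odd j; clear; move=> ->; nia.
have [ob Pv] := @parity_window_eq k (odd j) b (row_walk k s j - v)
  (- (y %/ (k.*2)%:Z)%Z - c - t%:Z) ltac:(lia) ltac:(lia) ltac:(lia) ltac:(lia).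
by exists j; split => //; lia.
Qed.

Lemma latin_walk_of_row : inner_distance k.*2 s = (k - 1)%N -> latin_walk k (row_walk k s).
Proof.
move=> Hid; constructor => //.
- exact: row_walk0.
- exact: latin_row_steps.
- exact: latin_row_eq_odd.
- exact: latin_row_odd_not_antipodal.
- exact: latin_row_surj.
Qed.

End LatinRowWalk.

Lemma ext_h_hdiff k s : (3 <= k)%N -> ext_h k.*2 s = hdiff k.*2 s (k.*2 - 1) - k%:Z.
Proof.
move=> k3; rewrite /ext_h /ext_diff_row (nth_map 0%N) ?size_iota; last lia.
by rewrite nth_iota ?doubleK ?subn1 //; lia.
Qed.

Lemma ext_h_lt k s : (3 <= k)%N -> ext_h k.*2 s < k%:Z.
Proof.
move=> k3; rewrite ext_h_hdiff //.
by have := @ltz_pmod (hdiff k.*2 s (k.*2 - 1)) (k.*2)%:Z; rewrite /hdiff => /(_ ltac:(lia)); lia.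
Qed.

Lemma row_closing_congr k s : (3 <= k)%N -> latin_row k.*2 s ->
  closing_congr k (row_walk k s) (ext_h k.*2 s).
Proof.
move=> k3 L; rewrite /closing_congr ext_h_hdiff // /hdiff.
have [c hc] := @row_nth_congr k s (k.*2 - 1)%N ltac:(lia).
rewrite (_ : (k.*2 - 1).+1 %% k.*2 = 0)%N; last by rewrite (_ : (k.*2 - 1).+1 = k.*2)%N ?modnn; lia.
have := divz_eq ((nth 0%N s 0)%:Z - (nth 0%N s (k.*2 - 1))%:Z) (k.*2)%:Z.
move: (_ %/ _)%Z => q ey.
have nk : (k.*2 - 1)%N%:Z * k%:Z + k%:Z = k%:Z * (k.*2)%:Z by clear; nia.
by exists (- q - k%:Z - c); lia.
Qed.

Lemma ext_diff_row_walk k s : (3 <= k)%N ->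
  ext_diff_row k.*2 s = diffs (row_walk k s) (k.*2 - 1) ++ [:: ext_h k.*2 s].
Proof.
move=> k3; rewrite ext_h_hdiff // /ext_diff_row doubleK.
rewrite (_ : iota 0 k.*2 = iota 0 (k.*2 - 1) ++ iota (k.*2 - 1) 1); last first.
  by rewrite -iotaD; congr iota; lia.
rewrite map_cat; congr (_ ++ _).
by apply: eq_map => i /=; rewrite row_walkS /row_eps; lia.
Qed.

Lemma ext_row_shape_of_latin_row n k s : n = k.*2 -> (3 <= k)%N -> latin_row n s ->
  inner_distance n s = (k - 1)%N -> 0 <= ext_h n s ->
  ext_row_shape n k (ext_diff_row n s) (ext_h n s) (ext_eps n s).
Proof.
move=> -> k3 L Hid Hh.
rewrite /ext_eps ext_diff_row_walk // take_size_cat; last by rewrite size_mkseq subn1.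
exact: latin_walk_shape (latin_walk_of_row k3 L Hid) Hh (ext_h_lt s k3) (row_closing_congr k3 L).
Qed.

Theorem mainTheorem5 (n : nat) (s : seq nat) :
  (6 <= n)%N -> ~~ odd n ->
  latin_row n s ->
  inner_distance n s = (n./2 - 1)%N ->
  0 <= ext_h n s ->
  let d := ext_diff_row n s in
  let h := ext_h n s in
  let eps := ext_eps n s in
  let k := n./2 in
  (* (0) *)
  (h = 0 /\
     (is_rotation_of d (pw (k - 1) 1 ++ [:: 0] ++ pw (k - 1) (-1) ++ [:: 0])
      \/ d = pw n 1 \/ d = pw n (-1)))
  (* (Type 1), first alternative *)
  \/ (0 < h /\ all (fun e => e \in [:: 0; -1]) eps /\
      h = (k - 1)%N%:Z /\ eps = pairs (k - 1) 0 (-1) ++ [:: 0])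
  (* (Type 1), second alternative *)
  \/ (0 < h /\ all (fun e => e \in [:: 0; 1]) eps /\
      exists hn : nat, h = hn%:Z /\ (1 <= hn <= k - 1)%N /\
        ((n %% 4 == 0)%N -> odd hn) /\ ((n %% 4 == 2)%N -> ~~ odd hn) /\
        d = pw (k - hn + 1) 1 ++ pairs (hn - 1) 0 1 ++ pw (k - hn) 1 ++ [:: hn%:Z])
  (* (Type 2) *)
  \/ (0 < h /\ 0 \in eps /\ 1 \in eps /\ -1 \in eps /\
      exists hn m : nat, h = hn%:Z /\ (1 <= hn <= k - 2)%N /\ (m <= k - 1 - hn)%N /\
        d = pw m 1 ++ [:: 0] ++ pw m.+1 (-1) ++ pairs (hn - 1) 0 (-1)
            ++ pw (k - hn - m - 1) (-1) ++ [:: 0] ++ pw (k - hn - m - 1) 1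
            ++ [:: hn%:Z]).
Proof.
move=> n6 n_even L Hid Hh.
have En : n = (n./2).*2 by rewrite -{1}(odd_double_half n) (negbTE n_even).
have k3 : (3 <= n./2)%N by lia.
exact: ext_row_shape_of_latin_row En k3 L Hid Hh.
Qed.
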